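(* For a non-negative integer $n$ and real $x>0$ small, define $$A_n(x)=2\ln(n!\,x)+\ln|\Gamma(-n-x)|+\ln|\Gamma(-n+x)|-x^2\sum_{k=1}^n\frac1{k^2}.$$ Then for every non-negative integer $n$, $$\lim_{x\to0^+}\frac{1}{x^2}\ln\!\left(\frac{A_n(x)}{A_{n+1}(x)}\right)=-\frac{1}{2(n+1)^4\zeta(2)}.$$
   Context: $\Gamma$ is Euler's Gamma function on the real line and $\zeta$ is the Riemann zeta function. *)

From Stdlib Require Import Reals.
From Coquelicot Require Import Coquelicot.
Open Scope R_scope.

Definition Gamma_pos (x : R) : R :=
  RInt_gen (fun t => Rpower t (x - 1) * exp (- t)) (at_right 0) (Rbar_locally p_infty).

(* Number of unit shifts N so that x + N > 0. *)
Definition Gamma_shift (x : R) : nat := Z.to_nat (up (- x)).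

(* Euler's Gamma function on the real line: the integral for x > 0, extended to
   x <= 0 (non-integer) by the functional equation
   Gamma x = Gamma (x + N) / (x (x+1) ... (x+N-1)). Values at poles are junk. *)
Definition Gamma (x : R) : R :=
  if Rlt_dec 0 x then Gamma_pos x
  else let N := Gamma_shift x in
       Gamma_pos (x + INR N) / prod_f_R0 (fun k => x + INR k) (N - 1).

Definition zeta2 : R := Series (fun k => / (INR k + 1) ^ 2).

Definition A (n : nat) (x : R) : R :=
  2 * ln (INR (Factorial.fact n) * x) + ln (Rabs (Gamma (- INR n - x)))
  + ln (Rabs (Gamma (- INR n + x)))
  - x ^ 2 * sum_n_m (fun k => / INR k ^ 2) 1 n.

From Stdlib Require Import Reals Lra Lia Psatz Classical ZArith.
From Coquelicot Require Import Coquelicot.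
Open Scope R_scope.

(* With F(x) = lnGamma(1 + x) + lnGamma(1 - x), the functional equation turns
   A_n(x) into F(x) + sum_(k <= n) (- ln (1 - x^2/k^2) - x^2/k^2).  Telescoping
   lnGamma between 1 and N + 1 and bounding the remaining second difference by
   log-convexity (Hölder's inequality for Euler's integral) gives
   zeta(2) x^2 <= F(x) <= zeta(2) (x^2 + 2 x^4), hence A_n(x) ~ zeta(2) x^2.
   Since A_(n+1)(x) - A_n(x) = x^4 / (2 (n+1)^4) + O(x^6), the logarithm of
   A_n / A_(n+1) = 1 - (A_(n+1) - A_n) / A_(n+1) behaves like
   - x^2 / (2 (n+1)^4 zeta(2)). *)

(** * Limits at 0+ and improper integrals over ]0, +oo[ *)

Lemma at_right_0_between d : 0 < d -> at_right 0 (fun x => 0 < x < d).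
Proof.
intros Hd. exists (mkposreal d Hd). intros y Hy Hy0. split; [exact Hy0|].
change (Rabs (y - 0) < d) in Hy. apply Rabs_lt_between' in Hy. lra.
Qed.

Lemma filterlim_at_right_continuous (f : R -> R) x :
  continuous f x -> filterlim f (at_right x) (locally (f x)).
Proof.
intros Hf. exact (filterlim_filter_le_1 f (filter_le_within (F := locally x) _) Hf).
Qed.

Lemma lim_Rpower_at_right_0 s : 0 < s ->
  filterlim (fun t => Rpower t s) (at_right 0) (locally 0).
Proof.
intros Hs. apply filterlim_locally. intros [eps Heps]. simpl.
set (d := Rpower eps (/ s)).
assert (Hd : 0 < d) by apply exp_pos.
eapply filter_imp; [| exact (at_right_0_between _ Hd)].
intros t Ht. cbv beta in Ht. change (Rabs (Rpower t s - 0) < eps).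
assert (0 < Rpower t s) by apply exp_pos.
assert (Rpower t s < eps).
{ replace eps with (Rpower d s) by (unfold d; rewrite Rpower_mult, Rinv_l, Rpower_1; lra).
  apply Rlt_Rpower_l; lra. }
rewrite Rminus_0_r, Rabs_pos_eq; lra.
Qed.

Lemma filter_prod_at_right_0_p_infty (P : R -> R -> Prop) d M :
  0 < d -> (forall a b, 0 < a < d -> M < b -> P a b) ->
  filter_prod (at_right 0) (Rbar_locally p_infty) (fun ab => P (fst ab) (snd ab)).
Proof.
intros Hd HP. apply Filter_prod with (fun a => 0 < a < d) (fun b => M < b).
- now apply at_right_0_between.
- now exists M.
- intros a b Ha Hb. now apply HP.
Qed.

Lemma filterlim_at_right_0_quadratic (f : R -> R) L C d :
  0 < d -> (forall x, 0 < x < d -> Rabs (f x - L) <= C * x ^ 2) ->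
  filterlim f (at_right 0) (locally L).
Proof.
intros Hd Hf. apply filterlim_locally. intros [eps Heps]. simpl.
set (C' := Rabs C + 1).
assert (HC' : 0 < C') by (unfold C'; generalize (Rabs_pos C); lra).
assert (Hd' : 0 < Rmin d (Rmin 1 (eps / C'))).
{ repeat apply Rmin_glb_lt; try lra. now apply Rdiv_lt_0_compat. }
eapply filter_imp; [| exact (at_right_0_between _ Hd')].
intros x Hx. cbv beta in Hx. change (Rabs (f x - L) < eps).
assert (Hxd := Rmin_l d (Rmin 1 (eps / C'))).
assert (Hxd' := Rmin_r d (Rmin 1 (eps / C'))).
assert (Hx1 := Rmin_l 1 (eps / C')). assert (Hxe := Rmin_r 1 (eps / C')).
assert (Hxe' : C' * x < eps).
{ apply Rlt_le_trans with (C' * (eps / C')); [apply Rmult_lt_compat_l; lra|].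
  right. field. lra. }
apply Rle_lt_trans with (C * x ^ 2); [apply Hf; lra|].
assert (C <= C') by (unfold C'; generalize (Rle_abs C); lra).
assert (0 < x ^ 2 <= x) by (split; nra). nra.
Qed.

Section LimitAlgebra.

Context {T : Type} {F : (T -> Prop) -> Prop} {FF : Filter F}.

Lemma filterlim_Rmult_fun (f g : T -> R) a b :
  filterlim f F (locally a) -> filterlim g F (locally b) ->
  filterlim (fun x => f x * g x) F (locally (a * b)).
Proof.
intros Hf Hg. apply (filterlim_comp_2 f g Rmult Hf Hg).
exact (filterlim_mult (K := R_AbsRing) a b).
Qed.

Lemma filterlim_Rinv_fun (g : T -> R) b :
  b <> 0 -> filterlim g F (locally b) -> filterlim (fun x => / g x) F (locally (/ b)).
Proof.
intros Hb Hg. apply (filterlim_comp _ _ _ g Rinv F (locally b) (locally (/ b)) Hg).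
apply (filterlim_Rbar_inv (Finite b)). congruence.
Qed.

Lemma filterlim_Ropp_fun (g : T -> R) b :
  filterlim g F (locally b) -> filterlim (fun x => - g x) F (locally (- b)).
Proof.
intros Hg. apply (filterlim_comp _ _ _ g Ropp F (locally b) (locally (- b)) Hg).
exact (filterlim_opp (V := R_NormedModule) b).
Qed.

Lemma filterlim_Rminus_fun (f g : T -> R) a b :
  filterlim f F (locally a) -> filterlim g F (locally b) ->
  filterlim (fun x => f x - g x) F (locally (a - b)).
Proof.
intros Hf Hg.
apply (filterlim_comp_2 f (fun x => - g x) Rplus Hf (filterlim_Ropp_fun g b Hg)).
exact (filterlim_plus (V := R_NormedModule) a (- b)).
Qed.

End LimitAlgebra.

Lemma ex_RInt_continuous_pos (f : R -> R) a b :
  (forall t, 0 < t -> continuous f t) -> 0 < a -> 0 < b -> ex_RInt f a b.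
Proof.
intros Hf Ha Hb. apply (ex_RInt_continuous (V := R_CompleteNormedModule)).
intros z Hz. apply Hf. assert (0 < Rmin a b) by now apply Rmin_glb_lt. lra.
Qed.

Lemma RInt_le_RInt_sub (f : R -> R) a a' b' b :
  (forall t, 0 < t -> 0 <= f t) -> (forall t, 0 < t -> continuous f t) ->
  0 < a -> a <= a' -> a' <= b' -> b' <= b -> RInt f a' b' <= RInt f a b.
Proof.
intros Hf0 Hf Ha H1 H2 H3.
assert (Hex : forall u v, a <= u -> a <= v -> ex_RInt f u v)
  by (intros; apply ex_RInt_continuous_pos; auto; lra).
rewrite <- (RInt_Chasles (V := R_CompleteNormedModule) f a a' b) by (apply Hex; lra).
rewrite <- (RInt_Chasles (V := R_CompleteNormedModule) f a' b' b) by (apply Hex; lra).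
assert (0 <= RInt f a a') by (apply RInt_ge_0; auto; [apply Hex; lra | intros; apply Hf0; lra]).
assert (0 <= RInt f b' b) by (apply RInt_ge_0; auto; [apply Hex; lra | intros; apply Hf0; lra]).
unfold plus; simpl. lra.
Qed.

(* The integrals over [a, b] increase as [a] decreases and [b] increases,
   hence converge to their supremum. *)
Lemma ex_is_RInt_gen_nonneg (f : R -> R) M :
  (forall t, 0 < t -> 0 <= f t) -> (forall t, 0 < t -> continuous f t) ->
  (forall a b, 0 < a < 1 -> 1 < b -> RInt f a b <= M) ->
  exists l, is_RInt_gen f (at_right 0) (Rbar_locally p_infty) l /\
    forall a b, 0 < a < 1 -> 1 < b -> RInt f a b <= l.
Proof.
intros Hf0 Hf HM.
set (E := fun y => exists a b, 0 < a < 1 /\ 1 < b /\ y = RInt f a b).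
assert (HEb : bound E) by (exists M; intros y (a & b & Ha & Hb & ->); auto).
assert (HE : exists y, E y) by (exists (RInt f (1/2) 2), (1/2), 2; repeat split; lra).
destruct (completeness E HEb HE) as [l [Hub Hlub]].
assert (Hle : forall a b, 0 < a < 1 -> 1 < b -> RInt f a b <= l)
  by (intros a b Ha Hb; apply Hub; now exists a, b).
exists l. split; [|exact Hle].
apply filterlimi_lim_ext_loc with (f := fun ab => RInt f (fst ab) (snd ab)).
{ apply (filter_prod_at_right_0_p_infty (fun a b => is_RInt f a b (RInt f a b)) 1 1);
    [lra|]. intros a b Ha Hb. apply (RInt_correct (V := R_CompleteNormedModule)).
  apply ex_RInt_continuous_pos; auto; lra. }
apply filterlim_locally. intros [eps Heps]. simpl.
assert (Hex : exists a0 b0, 0 < a0 < 1 /\ 1 < b0 /\ l - eps < RInt f a0 b0).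
{ apply NNPP. intros Hn. enough (l <= l - eps) by lra.
  apply Hlub. intros y (a & b & Ha & Hb & ->). apply Rnot_lt_le. intros Hlt.
  apply Hn. now exists a, b. }
destruct Hex as (a0 & b0 & Ha0 & Hb0 & Hlt).
apply (filter_prod_at_right_0_p_infty (fun a b => ball l eps (RInt f a b)) a0 b0);
  [lra|]. intros a b Ha Hb.
assert (RInt f a0 b0 <= RInt f a b) by (apply RInt_le_RInt_sub; auto; lra).
assert (RInt f a b <= l) by (apply Hle; lra).
change (Rabs (RInt f a b - l) < eps). apply Rabs_def1; lra.
Qed.

Lemma is_RInt_gen_antiderivative (F f : R -> R) la lb :
  (forall t, 0 < t -> is_derive F t (f t)) -> (forall t, 0 < t -> continuous f t) ->
  filterlim F (at_right 0) (locally la) -> filterlim F (Rbar_locally p_infty) (locally lb) ->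
  is_RInt_gen f (at_right 0) (Rbar_locally p_infty) (lb - la).
Proof.
intros HF Hf Hla Hlb.
apply filterlimi_lim_ext_loc with (f := fun ab => F (snd ab) - F (fst ab)).
- apply (filter_prod_at_right_0_p_infty (fun a b => is_RInt f a b (F b - F a)) 1 1);
    [lra|]. intros a b Ha Hb.
  assert (0 < Rmin a b) by (apply Rmin_glb_lt; lra).
  apply (is_RInt_derive (V := R_CompleteNormedModule) F f a b); intros x Hx.
  + apply HF. lra.
  + apply Hf. lra.
- apply filterlim_Rminus_fun.
  + exact (filterlim_comp _ _ _ snd F _ _ _ filterlim_snd Hlb).
  + exact (filterlim_comp _ _ _ fst F _ _ _ filterlim_fst Hla).
Qed.

(** * Euler's integral *)

Definition gamma_integrand (s t : R) : R := Rpower t (s - 1) * exp (- t).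

Lemma Gamma_pos_unique s l :
  is_RInt_gen (gamma_integrand s) (at_right 0) (Rbar_locally p_infty) l -> Gamma_pos s = l.
Proof. exact (is_RInt_gen_unique (V := R_CompleteNormedModule) (gamma_integrand s) l). Qed.

Lemma gamma_integrand_pos s t : 0 < gamma_integrand s t.
Proof. apply Rmult_lt_0_compat; apply exp_pos. Qed.

Lemma gamma_integrand_continuous s t : 0 < t -> continuous (gamma_integrand s) t.
Proof.
intros Ht. apply (ex_derive_continuous (V := R_NormedModule)).
unfold gamma_integrand, Rpower. auto_derive. lra.
Qed.

Lemma Rpower_le_exp s : exists K, 0 < K /\ forall t, 1 <= t -> Rpower t s <= K * exp t.
Proof.
destruct (INR_unbounded (Rmax s 1)) as [m Hm].
assert (Hs := Rmax_l s 1). assert (H1 := Rmax_r s 1).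
assert (Hm0 : 0 < INR m) by lra.
exists (INR m ^ m). split; [apply pow_lt; lra|]. intros t Ht.
apply Rle_trans with (Rpower t (INR m)); [apply Rle_Rpower; lra|].
rewrite Rpower_pow by lra.
replace (t ^ m) with (INR m ^ m * (t / INR m) ^ m)
  by (rewrite <- Rpow_mult_distr; f_equal; field; lra).
apply Rmult_le_compat_l; [apply pow_le; lra|].
replace (exp t) with (exp (t / INR m) ^ m)
  by (rewrite <- Rpower_pow by apply exp_pos; unfold Rpower; rewrite ln_exp;
      f_equal; field; lra).
apply pow_incr. split; [apply Rdiv_le_0_compat; lra|].
generalize (exp_ineq1_le (t / INR m)). lra.
Qed.

Lemma gamma_integrand_tail s : exists K, 0 < K /\
  forall t, 1 <= t -> gamma_integrand s t <= K / t ^ 2.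
Proof.
destruct (Rpower_le_exp (s + 1)) as [K [HK HKt]].
exists K. split; [exact HK|]. intros t Ht.
replace (gamma_integrand s t) with (Rpower t (s + 1) * exp (- t) / t ^ 2).
2:{ unfold gamma_integrand. replace (s + 1) with ((s - 1) + INR 2) by (simpl; ring).
    rewrite Rpower_plus, Rpower_pow by lra. field. lra. }
unfold Rdiv. apply Rmult_le_compat_r; [apply Rlt_le, Rinv_0_lt_compat, pow_lt; lra|].
replace K with (K * exp t * exp (- t)) by (rewrite Rmult_assoc, <- exp_plus,
  Rplus_opp_r, exp_0; ring).
apply Rmult_le_compat_r; [apply Rlt_le, exp_pos | now apply HKt].
Qed.

Lemma lim_gamma_integrand_p_infty s :
  filterlim (gamma_integrand s) (Rbar_locally p_infty) (locally 0).
Proof.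
destruct (gamma_integrand_tail s) as [K [HK HKt]].
apply filterlim_locally. intros [eps Heps]. exists (Rmax 1 (K / eps)).
intros t Ht. simpl. change (Rabs (gamma_integrand s t - 0) < eps).
assert (H1 := Rmax_l 1 (K / eps)). assert (H2 := Rmax_r 1 (K / eps)).
assert (Hpos := gamma_integrand_pos s t).
assert (HKe : K / t < eps).
{ apply Rmult_lt_reg_r with (t / eps); [apply Rdiv_lt_0_compat; lra|].
  replace (K / t * (t / eps)) with (K / eps) by (field; lra).
  replace (eps * (t / eps)) with t by (field; lra). lra. }
assert (K / t ^ 2 <= K / t).
{ unfold Rdiv. apply Rmult_le_compat_l; [lra|]. apply Rinv_le_contravar; nra. }
assert (Ht' := HKt t ltac:(lra)).
rewrite Rminus_0_r, Rabs_pos_eq by lra. lra.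
Qed.

Lemma RInt_gamma_integrand_bounded s : 0 < s -> exists M,
  forall a b, 0 < a < 1 -> 1 < b -> RInt (gamma_integrand s) a b <= M.
Proof.
intros Hs. destruct (gamma_integrand_tail s) as [K [HK HKt]].
exists (1 / s + K). intros a b Ha Hb.
assert (Hex : forall u v, 0 < u -> 0 < v -> ex_RInt (gamma_integrand s) u v)
  by (intros; apply ex_RInt_continuous_pos; auto; apply gamma_integrand_continuous).
rewrite <- (RInt_Chasles (V := R_CompleteNormedModule) _ a 1 b) by (apply Hex; lra).
assert (Hhead : RInt (gamma_integrand s) a 1 <= (Rpower 1 s - Rpower a s) / s).
{ apply is_RInt_le with (gamma_integrand s) (fun t => Rpower t (s - 1)) a 1; try lra.
  - apply (RInt_correct (V := R_CompleteNormedModule)). apply Hex; lra.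
  - replace ((Rpower 1 s - Rpower a s) / s) with (minus (Rpower 1 s / s) (Rpower a s / s))
      by (unfold minus, plus, opp; simpl; field; lra).
    apply (is_RInt_derive (V := R_CompleteNormedModule) (fun t => Rpower t s / s));
      rewrite Rmin_left, Rmax_right by lra; intros x Hx.
    + unfold Rpower. auto_derive; [lra|].
      replace ((s - 1) * ln x) with (s * ln x + - ln x) by ring.
      rewrite exp_plus, exp_Ropp, exp_ln by lra. field. lra.
    + apply (ex_derive_continuous (V := R_NormedModule)). unfold Rpower. auto_derive. lra.
  - intros x Hx. unfold gamma_integrand.
    rewrite <- (Rmult_1_r (Rpower x (s - 1))) at 2.
    apply Rmult_le_compat_l; [apply Rlt_le, exp_pos|].
    rewrite <- exp_0. apply Rlt_le, exp_increasing. lra. }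
assert (Htail : RInt (gamma_integrand s) 1 b <= K - K / b).
{ apply is_RInt_le with (gamma_integrand s) (fun t => K / t ^ 2) 1 b; try lra.
  - apply (RInt_correct (V := R_CompleteNormedModule)). apply Hex; lra.
  - replace (K - K / b) with (minus (- K / b) (- K / 1))
      by (unfold minus, plus, opp; simpl; field; lra).
    apply (is_RInt_derive (V := R_CompleteNormedModule));
      rewrite Rmin_left, Rmax_right by lra; intros x Hx.
    + auto_derive; [lra|]. field. lra.
    + apply (ex_derive_continuous (V := R_NormedModule)). auto_derive. nra.
  - intros x Hx. apply HKt. lra. }
unfold Rpower at 1 in Hhead. rewrite ln_1, Rmult_0_r, exp_0 in Hhead.
assert (0 < Rpower a s) by apply exp_pos.
assert (0 < K / b) by (apply Rdiv_lt_0_compat; lra).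
assert ((1 - Rpower a s) / s <= 1 / s) by (apply Rmult_le_compat_r;
  [apply Rlt_le, Rinv_0_lt_compat|]; lra).
unfold plus; simpl. lra.
Qed.

Lemma Gamma_pos_spec s : 0 < s ->
  is_RInt_gen (gamma_integrand s) (at_right 0) (Rbar_locally p_infty) (Gamma_pos s)
  /\ RInt (gamma_integrand s) (1 / 2) 2 <= Gamma_pos s.
Proof.
intros Hs. destruct (RInt_gamma_integrand_bounded s Hs) as [M HM].
destruct (ex_is_RInt_gen_nonneg (gamma_integrand s) M) as [l [Hl Hle]]; auto.
- intros t _. apply Rlt_le, gamma_integrand_pos.
- apply gamma_integrand_continuous.
- rewrite (Gamma_pos_unique s l Hl). split; [exact Hl | apply Hle; lra].
Qed.

Lemma Gamma_pos_correct s : 0 < s ->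
  is_RInt_gen (gamma_integrand s) (at_right 0) (Rbar_locally p_infty) (Gamma_pos s).
Proof. intros Hs. apply (Gamma_pos_spec s Hs). Qed.

Lemma Gamma_pos_gt_0 s : 0 < s -> 0 < Gamma_pos s.
Proof.
intros Hs. apply Rlt_le_trans with (RInt (gamma_integrand s) (1 / 2) 2);
  [|apply (Gamma_pos_spec s Hs)].
apply RInt_gt_0; [lra | intros; apply gamma_integrand_pos |].
intros; apply gamma_integrand_continuous; lra.
Qed.

Lemma Gamma_pos_1 : Gamma_pos 1 = 1.
Proof.
apply Gamma_pos_unique. replace 1 with (0 - - exp (- 0)) at 2
  by (rewrite Ropp_0, exp_0; ring).
apply (is_RInt_gen_antiderivative (fun t => - exp (- t))).
- intros t Ht. unfold gamma_integrand, Rpower. auto_derive; [easy|].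
  rewrite Rminus_diag, Rmult_0_l, exp_0. ring.
- apply gamma_integrand_continuous.
- apply (filterlim_at_right_continuous (fun t => - exp (- t))).
  apply (ex_derive_continuous (V := R_NormedModule)). auto_derive. easy.
- apply (filterlim_ext (fun t => - gamma_integrand 1 t)).
  + intros t. unfold gamma_integrand, Rpower. rewrite Rminus_diag, Rmult_0_l, exp_0. ring.
  + rewrite <- Ropp_0. apply filterlim_Ropp_fun, lim_gamma_integrand_p_infty.
Qed.

Lemma Gamma_pos_succ s : 0 < s -> Gamma_pos (s + 1) = s * Gamma_pos s.
Proof.
intros Hs.
set (f := fun t => s * gamma_integrand s t - gamma_integrand (s + 1) t).
assert (Hf : is_RInt_gen f (at_right 0) (Rbar_locally p_infty) (0 - 0)).
{ apply (is_RInt_gen_antiderivative (gamma_integrand (s + 1))).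
  - intros t Ht. unfold f, gamma_integrand, Rpower. auto_derive; [easy|].
    replace (s + 1 - 1) with s by ring.
    replace ((s - 1) * ln t) with (s * ln t + - ln t) by ring.
    rewrite exp_plus, (exp_Ropp (ln t)), exp_ln by lra. field. lra.
  - intros t Ht. apply (ex_derive_continuous (V := R_NormedModule)).
    unfold f, gamma_integrand, Rpower. auto_derive. lra.
  - assert (Hexp : continuous (fun t => exp (- t)) 0)
      by (apply (ex_derive_continuous (V := R_NormedModule)); auto_derive; easy).
    assert (H := filterlim_Rmult_fun _ _ _ _ (lim_Rpower_at_right_0 s Hs)
      (filterlim_at_right_continuous _ _ Hexp)).
    rewrite Rmult_0_l in H. refine (filterlim_ext _ _ _ H).
    intros t. unfold gamma_integrand. now replace (s + 1 - 1) with s by ring.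
  - apply lim_gamma_integrand_p_infty. }
assert (H := is_RInt_gen_minus (Fa := at_right 0) (Fb := Rbar_locally p_infty) _ _ _ _
  (is_RInt_gen_scal _ s _ (Gamma_pos_correct s Hs)) Hf).
assert (E : forall z, minus (scal s z) (0 - 0) = s * z)
  by (intros; unfold minus, plus, opp, scal; simpl; unfold mult; simpl; ring).
rewrite E in H.
apply Gamma_pos_unique. refine (is_RInt_gen_ext _ _ _ _ H).
apply (filter_prod_at_right_0_p_infty (fun a b => forall x, Rmin a b < x < Rmax a b ->
  minus (scal s (gamma_integrand s x)) (f x) = gamma_integrand (s + 1) x) 1 1); [lra|].
intros a b _ _ x _. unfold f, minus, plus, opp, scal; simpl. unfold mult; simpl. ring.
Qed.

Lemma exp_convex l u v : 0 <= l <= 1 ->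
  exp (l * u + (1 - l) * v) <= l * exp u + (1 - l) * exp v.
Proof.
intros Hl. set (c := l * u + (1 - l) * v).
assert (Hw : forall w, exp c * (1 + (w - c)) <= exp w).
{ intros w. replace (exp w) with (exp c * exp (w - c)) by (rewrite <- exp_plus; f_equal; ring).
  apply Rmult_le_compat_l; [apply Rlt_le, exp_pos | apply exp_ineq1_le]. }
assert (Hu := Hw u). assert (Hv := Hw v).
replace (exp c) with (l * (exp c * (1 + (u - c))) + (1 - l) * (exp c * (1 + (v - c))))
  by (unfold c; ring).
nra.
Qed.

(* Hölder's inequality for the Gamma integral, obtained by integrating the
   pointwise convexity bound for [exp] on the logarithms of the normalised integrands. *)
Lemma ln_Gamma_pos_convex x y l : 0 < x -> 0 < y -> 0 < l < 1 ->
  ln (Gamma_pos (l * x + (1 - l) * y))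
  <= l * ln (Gamma_pos x) + (1 - l) * ln (Gamma_pos y).
Proof.
intros Hx Hy Hl.
set (s := l * x + (1 - l) * y).
assert (Hs : 0 < s) by (unfold s; nra).
set (p := Gamma_pos x). set (q := Gamma_pos y).
assert (Hp : 0 < p) by now apply Gamma_pos_gt_0.
assert (Hq : 0 < q) by now apply Gamma_pos_gt_0.
set (C := exp (l * ln p + (1 - l) * ln q)).
set (g := fun t => C * (l / p * gamma_integrand x t + (1 - l) / q * gamma_integrand y t)).
assert (Hpt : forall t, 0 < t -> gamma_integrand s t <= g t).
{ intros t Ht. unfold g, gamma_integrand, Rpower, C.
  set (u := (x - 1) * ln t + - t - ln p).
  set (v := (y - 1) * ln t + - t - ln q).
  rewrite <- !exp_plus.
  replace ((s - 1) * ln t + - t) with ((l * ln p + (1 - l) * ln q) + (l * u + (1 - l) * v))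
    by (unfold u, v, s; ring).
  rewrite exp_plus. apply Rmult_le_compat_l; [apply Rlt_le, exp_pos|].
  replace (exp ((x - 1) * ln t + - t)) with (p * exp u)
    by (unfold u; rewrite <- (exp_ln p) at 1 by lra; rewrite <- exp_plus; f_equal; ring).
  replace (exp ((y - 1) * ln t + - t)) with (q * exp v)
    by (unfold v; rewrite <- (exp_ln q) at 1 by lra; rewrite <- exp_plus; f_equal; ring).
  replace (l / p * (p * exp u) + (1 - l) / q * (q * exp v))
    with (l * exp u + (1 - l) * exp v) by (field; lra).
  apply exp_convex; lra. }
assert (Hg : is_RInt_gen g (at_right 0) (Rbar_locally p_infty) C).
{ assert (Hxy := is_RInt_gen_plus (Fa := at_right 0) (Fb := Rbar_locally p_infty) _ _ _ _
    (is_RInt_gen_scal _ (l / p) _ (Gamma_pos_correct x Hx))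
    (is_RInt_gen_scal _ ((1 - l) / q) _ (Gamma_pos_correct y Hy))).
  assert (H := is_RInt_gen_scal _ C _ Hxy). fold p q in H.
  match type of H with is_RInt_gen _ _ _ ?v => replace v with C in H end; [exact H|].
  unfold scal, plus; simpl; unfold mult; simpl. field. lra. }
assert (Hle : norm (Gamma_pos s) <= C).
{ apply (RInt_gen_norm (V := R_CompleteNormedModule) (Fa := at_right 0)
    (Fb := Rbar_locally p_infty) (gamma_integrand s) g (Gamma_pos s) C);
    [| | now apply Gamma_pos_correct | exact Hg].
  - apply (filter_prod_at_right_0_p_infty (fun a b => a <= b) 1 1); [lra|].
    intros; lra.
  - apply (filter_prod_at_right_0_p_infty
      (fun a b => forall z, a <= z <= b -> norm (gamma_integrand s z) <= g z) 1 1); [lra|].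
    intros a b Ha Hb z Hz. change (Rabs (gamma_integrand s z) <= g z).
    rewrite Rabs_pos_eq by apply Rlt_le, gamma_integrand_pos. apply Hpt. lra. }
change (Rabs (Gamma_pos s) <= C) in Hle.
rewrite Rabs_pos_eq in Hle by now apply Rlt_le, Gamma_pos_gt_0.
apply Rle_trans with (ln C); [apply ln_le; [now apply Gamma_pos_gt_0 | easy]|].
unfold C. rewrite ln_exp. lra.
Qed.

(** * lnGamma near 1 and the series zeta(2) *)

Definition lnGamma (s : R) : R := ln (Gamma_pos s).

Lemma lnGamma_1 : lnGamma 1 = 0.
Proof. unfold lnGamma. rewrite Gamma_pos_1. apply ln_1. Qed.

Lemma lnGamma_succ s : 0 < s -> lnGamma (s + 1) = lnGamma s + ln s.
Proof.
intros Hs. unfold lnGamma. rewrite Gamma_pos_succ, ln_mult by (auto; now apply Gamma_pos_gt_0).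
ring.
Qed.

Lemma ln_le_sub_1 z : 0 < z -> ln z <= z - 1.
Proof. intros Hz. generalize (exp_ineq1_le (ln z)). rewrite exp_ln; lra. Qed.

(* The lower bound is midpoint convexity of [lnGamma] at [M + 1]; the upper bound
   compares [lnGamma] with its chords over [M, M + 1] and [M + 1, M + 2], whose
   slopes are [ln M] and [ln (M + 1)]. *)
Lemma lnGamma_second_difference M x : 1 <= M -> 0 < x < 1 ->
  0 <= lnGamma (M + 1 + x) + lnGamma (M + 1 - x) - 2 * lnGamma (M + 1) <= x / M.
Proof.
intros HM Hx. unfold lnGamma. split.
- assert (H := ln_Gamma_pos_convex (M + 1 + x) (M + 1 - x) (1 / 2)
    ltac:(lra) ltac:(lra) ltac:(lra)).
  replace (1 / 2 * (M + 1 + x) + (1 - 1 / 2) * (M + 1 - x)) with (M + 1) in H by field.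
  lra.
- assert (H1 := ln_Gamma_pos_convex (M + 1) (M + 2) (1 - x) ltac:(lra) ltac:(lra) ltac:(lra)).
  replace ((1 - x) * (M + 1) + (1 - (1 - x)) * (M + 2)) with (M + 1 + x) in H1 by ring.
  assert (H2 := ln_Gamma_pos_convex M (M + 1) x ltac:(lra) ltac:(lra) ltac:(lra)).
  replace (x * M + (1 - x) * (M + 1)) with (M + 1 - x) in H2 by ring.
  assert (E1 := lnGamma_succ (M + 1) ltac:(lra)).
  assert (E2 := lnGamma_succ M ltac:(lra)).
  replace (M + 1 + 1) with (M + 2) in E1 by ring. unfold lnGamma in E1, E2.
  assert (H3 : ln (M + 1) - ln M <= 1 / M).
  { rewrite <- ln_div by lra.
    replace (1 / M) with ((M + 1) / M - 1) by (field; lra).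
    apply ln_le_sub_1. apply Rdiv_lt_0_compat; lra. }
  replace (x / M) with (x * (1 / M)) by (field; lra). nra.
Qed.

Lemma sum_n_m_1_0 (f : nat -> R) : sum_n_m f 1 0 = 0.
Proof. now rewrite sum_n_m_zero by lia. Qed.

Lemma sum_n_m_1_S (f : nat -> R) n : sum_n_m f 1 (S n) = sum_n_m f 1 n + f (S n).
Proof. now rewrite sum_n_Sm by lia. Qed.

Definition harmonic2 (N : nat) : R := sum_n_m (fun k => / INR k ^ 2) 1 N.

(* Minus the logarithm of the partial Euler product prod_(k <= N) (1 - x^2/k^2)
   of sin (PI x) / (PI x). *)
Definition euler_log_sum (x : R) (N : nat) : R :=
  sum_n_m (fun k => - ln (1 - x ^ 2 / INR k ^ 2)) 1 N.

Lemma neg_ln_one_minus_sq k x : 0 < x < k ->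
  - ln (1 - x ^ 2 / k ^ 2) = 2 * ln k - ln (k + x) - ln (k - x).
Proof.
intros Hx. replace (1 - x ^ 2 / k ^ 2) with ((k + x) * (k - x) / (k * k)) by (field; lra).
rewrite ln_div, !ln_mult by nra. ring.
Qed.

Lemma lnGamma_sym_telescope x N : 0 < x < 1 ->
  lnGamma (1 + x) + lnGamma (1 - x)
  = lnGamma (INR N + 1 + x) + lnGamma (INR N + 1 - x) - 2 * lnGamma (INR N + 1)
    + euler_log_sum x N.
Proof.
intros Hx. unfold euler_log_sum. induction N as [|N IH].
- rewrite sum_n_m_1_0. simpl INR. rewrite !Rplus_0_l, lnGamma_1. ring.
- assert (HN := pos_INR N).
  rewrite sum_n_m_1_S, IH, S_INR.
  replace (INR N + 1 + 1 + x) with ((INR N + 1 + x) + 1) by ring.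
  replace (INR N + 1 + 1 - x) with ((INR N + 1 - x) + 1) by ring.
  rewrite (lnGamma_succ (INR N + 1 + x)), (lnGamma_succ (INR N + 1 - x)),
    (lnGamma_succ (INR N + 1)), neg_ln_one_minus_sq by lra. ring.
Qed.

Lemma harmonic2_sum_n N : sum_n (fun k => / (INR k + 1) ^ 2) N = harmonic2 (S N).
Proof.
unfold harmonic2. induction N as [|N IH].
- rewrite sum_O, sum_n_m_1_S, sum_n_m_1_0. simpl. field.
- rewrite sum_Sn, IH, (sum_n_m_1_S _ (S N)), <- (S_INR (S N)). reflexivity.
Qed.

Lemma inv_succ_sq_pos N : 0 < / (INR N + 1) ^ 2.
Proof. apply Rinv_0_lt_compat, pow_lt. generalize (pos_INR N). lra. Qed.

Lemma harmonic2_succ N : harmonic2 (S N) = harmonic2 N + / (INR N + 1) ^ 2.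
Proof. unfold harmonic2. now rewrite sum_n_m_1_S, S_INR. Qed.

Lemma harmonic2_nonneg N : 0 <= harmonic2 N.
Proof.
induction N as [|N IH]; [unfold harmonic2; rewrite sum_n_m_1_0; lra|].
rewrite harmonic2_succ. generalize (inv_succ_sq_pos N). lra.
Qed.

Lemma harmonic2_le_2 N : harmonic2 N <= 2.
Proof.
assert (H : forall n, harmonic2 (S n) <= 2 - 1 / (INR n + 1)).
{ clear N. induction n as [|N IH].
  - rewrite harmonic2_succ. unfold harmonic2. rewrite sum_n_m_1_0. simpl. lra.
  - rewrite harmonic2_succ, S_INR. assert (HN := pos_INR N).
    assert (/ (INR N + 1 + 1) ^ 2 <= 1 / (INR N + 1) - 1 / (INR N + 1 + 1)).
    { replace (1 / (INR N + 1) - 1 / (INR N + 1 + 1))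
        with (/ ((INR N + 1) * (INR N + 1 + 1))) by (field; lra).
      apply Rinv_le_contravar; nra. }
    lra. }
destruct N as [|N]; [unfold harmonic2; rewrite sum_n_m_1_0; lra|].
assert (0 < 1 / (INR N + 1)) by (apply Rdiv_lt_0_compat; generalize (pos_INR N); lra).
generalize (H N). lra.
Qed.

Lemma harmonic2_lim : is_lim_seq harmonic2 zeta2.
Proof.
set (a := fun k => / (INR k + 1) ^ 2).
assert (Hex : ex_series a).
{ apply (ex_finite_lim_seq_incr _ 2).
  - intros n. rewrite !harmonic2_sum_n, (harmonic2_succ (S n)).
    generalize (inv_succ_sq_pos (S n)). lra.
  - intros n. rewrite harmonic2_sum_n. apply harmonic2_le_2. }
apply is_lim_seq_incr_1.
apply (is_lim_seq_ext (sum_n a)); [apply harmonic2_sum_n|].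
exact (Series_correct a Hex).
Qed.

Lemma harmonic2_ge_1 N : 1 <= harmonic2 (S N).
Proof.
induction N as [|N IH].
- unfold harmonic2. rewrite sum_n_m_1_S, sum_n_m_1_0. simpl. lra.
- rewrite harmonic2_succ. generalize (inv_succ_sq_pos (S N)). lra.
Qed.

Lemma zeta2_ge_1 : 1 <= zeta2.
Proof.
apply (is_lim_seq_le (fun _ => 1) (fun N => harmonic2 (S N)) 1 zeta2);
  [apply harmonic2_ge_1 | apply is_lim_seq_const |].
apply (is_lim_seq_incr_1 harmonic2). apply harmonic2_lim.
Qed.

Lemma ln_one_minus_bounds y : y < 1 -> - y / (1 - y) <= ln (1 - y) <= - y.
Proof.
intros Hy. split.
- rewrite <- (Ropp_involutive (ln (1 - y))), <- ln_Rinv by lra.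
  replace (- y / (1 - y)) with (- (/ (1 - y) - 1)) by (field; lra).
  apply Ropp_le_contravar, ln_le_sub_1, Rinv_0_lt_compat. lra.
- generalize (ln_le_sub_1 (1 - y)). lra.
Qed.

Lemma neg_ln_one_minus_taylor y : 0 < y < 1 ->
  0 <= - ln (1 - y) - y - y ^ 2 / 2 <= y ^ 3 / (1 - y).
Proof.
intros Hy.
destruct (MVT_cor2 (fun t => - ln (1 - t) - t - t ^ 2 / 2) (fun t => t ^ 2 / (1 - t)) 0 y)
  as [c [Hc Hcy]]; [lra | |].
{ intros t Ht. apply is_derive_Reals. auto_derive; [lra|]. field. lra. }
cbv beta in Hc. rewrite !Rminus_0_r, ln_1 in Hc.
replace (- ln (1 - y) - y - y ^ 2 / 2) with (c ^ 2 / (1 - c) * y) by (rewrite <- Hc; field).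
replace (y ^ 3 / (1 - y)) with (y ^ 2 / (1 - y) * y) by (field; lra).
split; [apply Rmult_le_pos; [apply Rdiv_le_0_compat; nra | lra]|].
apply Rmult_le_compat_r; [lra|].
apply Rmult_le_compat; [nra | apply Rlt_le, Rinv_0_lt_compat; lra | apply pow_incr; lra |].
apply Rinv_le_contravar; lra.
Qed.

Lemma neg_ln_one_minus_sq_bounds x k : 0 < x <= 1 / 2 -> 1 <= k ->
  x ^ 2 / k ^ 2 <= - ln (1 - x ^ 2 / k ^ 2) <= (x ^ 2 + 2 * x ^ 4) / k ^ 2.
Proof.
intros Hx Hk. set (w := / k ^ 2).
assert (Hw : 0 < w <= 1).
{ split; [apply Rinv_0_lt_compat; nra|]. rewrite <- Rinv_1. apply Rinv_le_contravar; nra. }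
unfold Rdiv. fold w. set (y := x ^ 2 * w).
assert (Hx2 : 0 < x ^ 2 <= 1 / 4) by (split; nra).
assert (Hy : 0 < y <= 1 / 4) by (unfold y; split; nra).
destruct (ln_one_minus_bounds y ltac:(lra)) as [Hlo Hhi].
split; [lra|].
assert (y / (1 - y) <= y + 2 * y ^ 2).
{ apply Rmult_le_reg_r with (1 - y); [lra|].
  unfold Rdiv. rewrite Rmult_assoc, Rinv_l by lra. nra. }
assert (y ^ 2 <= x ^ 4 * w) by (unfold y; nra).
replace ((x ^ 2 + 2 * x ^ 4) * w) with (y + 2 * (x ^ 4 * w)) by (unfold y; ring).
lra.
Qed.

Lemma euler_log_sum_bounds x N : 0 < x <= 1 / 2 ->
  x ^ 2 * harmonic2 N <= euler_log_sum x N <= (x ^ 2 + 2 * x ^ 4) * harmonic2 N.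
Proof.
intros Hx. unfold euler_log_sum. induction N as [|N IH].
- unfold harmonic2. rewrite !sum_n_m_1_0. lra.
- rewrite sum_n_m_1_S, harmonic2_succ, <- S_INR.
  assert (Hk := neg_ln_one_minus_sq_bounds x (INR (S N)) Hx).
  assert (H1 : 1 <= INR (S N)) by (rewrite S_INR; generalize (pos_INR N); lra).
  specialize (Hk H1). unfold Rdiv in Hk. lra.
Qed.

Lemma is_lim_seq_harmonic2_succ_scal c :
  is_lim_seq (fun N => c * harmonic2 (S N)) (c * zeta2).
Proof.
apply (is_lim_seq_incr_1 (fun N => c * harmonic2 N)).
exact (is_lim_seq_scal_l _ c _ harmonic2_lim).
Qed.

Lemma is_lim_seq_inv_INR_succ : is_lim_seq (fun N => / INR (S N)) 0.
Proof.
apply (is_lim_seq_incr_1 (fun N => / INR N)).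
apply (is_lim_seq_inv _ p_infty); [exact is_lim_seq_INR | discriminate].
Qed.

(* Let [N -> +oo] in [lnGamma_sym_telescope]: the second difference is [O (1 / N)]. *)
Lemma lnGamma_sym_bounds x : 0 < x <= 1 / 2 ->
  zeta2 * x ^ 2 <= lnGamma (1 + x) + lnGamma (1 - x) <= zeta2 * (x ^ 2 + 2 * x ^ 4).
Proof.
intros Hx. set (F := lnGamma (1 + x) + lnGamma (1 - x)).
assert (Hdec : forall N, 0 <= F - euler_log_sum x (S N) <= x * / INR (S N)).
{ intros N. unfold F. rewrite (lnGamma_sym_telescope x (S N)) by lra.
  assert (H := lnGamma_second_difference (INR (S N)) x).
  rewrite S_INR in H |- *. assert (HN := pos_INR N).
  specialize (H ltac:(lra) ltac:(lra)). lra. }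
rewrite !(Rmult_comm zeta2). split.
- change (Rbar_le (x ^ 2 * zeta2) F).
  apply (is_lim_seq_le (fun N => x ^ 2 * harmonic2 (S N)) (fun _ => F));
    [| apply is_lim_seq_harmonic2_succ_scal | apply is_lim_seq_const].
  intros N. assert (H := euler_log_sum_bounds x (S N) Hx).
  specialize (Hdec N). lra.
- replace ((x ^ 2 + 2 * x ^ 4) * zeta2) with (x * 0 + (x ^ 2 + 2 * x ^ 4) * zeta2) by ring.
  change (Rbar_le F (x * 0 + (x ^ 2 + 2 * x ^ 4) * zeta2)).
  apply (is_lim_seq_le (fun _ => F)
    (fun N => x * / INR (S N) + (x ^ 2 + 2 * x ^ 4) * harmonic2 (S N)));
    [| apply is_lim_seq_const |].
  + intros N. assert (H := euler_log_sum_bounds x (S N) Hx).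
    specialize (Hdec N). lra.
  + apply is_lim_seq_plus'; [|apply is_lim_seq_harmonic2_succ_scal].
    exact (is_lim_seq_scal_l _ x _ is_lim_seq_inv_INR_succ).
Qed.

(** * Gamma at negative non-integers *)

Lemma Gamma_nonpos_eq y N : y <= 0 -> - y < INR N <= 1 - y ->
  Gamma y = Gamma_pos (y + INR N) / prod_f_R0 (fun k => y + INR k) (N - 1).
Proof.
intros Hy HN. unfold Gamma. destruct (Rlt_dec 0 y) as [H|_]; [lra|].
unfold Gamma_shift. replace (up (- y)) with (Z.of_nat N); [now rewrite Nat2Z.id|].
apply tech_up; rewrite <- INR_IZR_INZ; lra.
Qed.

Lemma prod_f_R0_shift c m :
  prod_f_R0 (fun k => c + INR k) (S m) = c * prod_f_R0 (fun k => (c + 1) + INR k) m.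
Proof.
induction m as [|m IH]; [simpl; ring|].
change (prod_f_R0 (fun k => c + INR k) (S (S m)))
  with (prod_f_R0 (fun k => c + INR k) (S m) * (c + INR (S (S m)))).
change (prod_f_R0 (fun k => c + 1 + INR k) (S m))
  with (prod_f_R0 (fun k => c + 1 + INR k) m * (c + 1 + INR (S m))).
rewrite IH, !S_INR. ring.
Qed.

Lemma prod_f_R0_neq_0 (g : nat -> R) m :
  (forall k, (k <= m)%nat -> g k <> 0) -> prod_f_R0 g m <> 0.
Proof.
induction m as [|m IH]; intros Hg; simpl; [apply Hg; lia|].
apply Rmult_integral_contrapositive_currified; [apply IH; intros; apply Hg|apply Hg]; lia.
Qed.

Lemma ln_abs_mult a b : a <> 0 -> b <> 0 -> ln (Rabs (a * b)) = ln (Rabs a) + ln (Rabs b).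
Proof. intros Ha Hb. rewrite Rabs_mult. apply ln_mult; now apply Rabs_pos_lt. Qed.

Lemma ln_abs_prod_neg_sub n x : 0 < x ->
  ln (Rabs (prod_f_R0 (fun k => - INR n - x + INR k) n))
  = ln x + sum_n_m (fun k => ln (INR k + x)) 1 n.
Proof.
intros Hx. induction n as [|n IH].
- replace (prod_f_R0 _ 0) with (- x) by (simpl; ring).
  rewrite sum_n_m_1_0, Rabs_Ropp, Rabs_pos_eq by lra. ring.
- rewrite prod_f_R0_shift, sum_n_m_1_S, S_INR.
  replace (- (INR n + 1) - x + 1) with (- INR n - x) by ring.
  assert (Hc : - (INR n + 1) - x < 0) by (generalize (pos_INR n); lra).
  assert (Hp : prod_f_R0 (fun k => - INR n - x + INR k) n <> 0).
  { apply prod_f_R0_neq_0. intros k Hk. apply le_INR in Hk. lra. }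
  rewrite (ln_abs_mult _ _ (Rlt_not_eq _ _ Hc) Hp), IH, (Rabs_left _ Hc).
  replace (- (- (INR n + 1) - x)) with (INR n + 1 + x) by ring. ring.
Qed.

Lemma ln_abs_prod_neg_add n x : 0 < x < 1 ->
  ln (Rabs (prod_f_R0 (fun k => - INR (S n) + x + INR k) n))
  = sum_n_m (fun k => ln (INR k - x)) 1 (S n).
Proof.
intros Hx. induction n as [|n IH].
- replace (prod_f_R0 _ 0) with (- (1 - x)) by (simpl; ring).
  rewrite sum_n_m_1_S, sum_n_m_1_0, Rabs_Ropp, Rabs_pos_eq by lra. simpl. ring.
- rewrite prod_f_R0_shift, (sum_n_m_1_S _ (S n)), !S_INR.
  replace (- (INR n + 1 + 1) + x + 1) with (- INR (S n) + x) by (rewrite S_INR; ring).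
  assert (Hc : - (INR n + 1 + 1) + x < 0) by (generalize (pos_INR n); lra).
  assert (Hp : prod_f_R0 (fun k => - INR (S n) + x + INR k) n <> 0).
  { apply prod_f_R0_neq_0. intros k Hk. apply le_INR in Hk. rewrite S_INR. lra. }
  rewrite (ln_abs_mult _ _ (Rlt_not_eq _ _ Hc) Hp), IH, (Rabs_left _ Hc).
  replace (- (- (INR n + 1 + 1) + x)) with (INR n + 1 + 1 - x) by ring. ring.
Qed.

Lemma ln_abs_Gamma_neg_sub n x : 0 < x < 1 ->
  ln (Rabs (Gamma (- INR n - x)))
  = lnGamma (1 - x) - ln x - sum_n_m (fun k => ln (INR k + x)) 1 n.
Proof.
intros Hx. assert (Hn := pos_INR n).
rewrite (Gamma_nonpos_eq _ (S n)) by (rewrite ?S_INR; lra).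
replace (S n - 1)%nat with n by lia.
replace (- INR n - x + INR (S n)) with (1 - x) by (rewrite S_INR; ring).
assert (Hp : prod_f_R0 (fun k => - INR n - x + INR k) n <> 0).
{ apply prod_f_R0_neq_0. intros k Hk. apply le_INR in Hk. lra. }
assert (HG : 0 < Gamma_pos (1 - x)) by (apply Gamma_pos_gt_0; lra).
rewrite (Rabs_div _ _ Hp), (Rabs_pos_eq _ (Rlt_le _ _ HG)), (ln_div _ _ HG (Rabs_pos_lt _ Hp)).
rewrite ln_abs_prod_neg_sub by lra. unfold lnGamma. ring.
Qed.

Lemma ln_abs_Gamma_neg_add n x : 0 < x < 1 ->
  ln (Rabs (Gamma (- INR n + x)))
  = lnGamma x - sum_n_m (fun k => ln (INR k - x)) 1 n.
Proof.
intros Hx. assert (HG : 0 < Gamma_pos x) by now apply Gamma_pos_gt_0.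
destruct n as [|n].
- unfold Gamma. simpl INR. rewrite Ropp_0, Rplus_0_l, sum_n_m_1_0.
  destruct (Rlt_dec 0 x); [|lra]. rewrite Rabs_pos_eq by lra. unfold lnGamma. ring.
- assert (Hn := pos_INR n).
  rewrite (Gamma_nonpos_eq _ (S n)) by (rewrite ?S_INR; lra).
  replace (S n - 1)%nat with n by lia.
  replace (- INR (S n) + x + INR (S n)) with x by ring.
  assert (Hp : prod_f_R0 (fun k => - INR (S n) + x + INR k) n <> 0).
  { apply prod_f_R0_neq_0. intros k Hk. apply le_INR in Hk. rewrite S_INR. lra. }
  rewrite (Rabs_div _ _ Hp), (Rabs_pos_eq _ (Rlt_le _ _ HG)),
    (ln_div _ _ HG (Rabs_pos_lt _ Hp)).
  rewrite ln_abs_prod_neg_add by lra. reflexivity.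
Qed.

Lemma ln_fact n : ln (INR (fact n)) = sum_n_m (fun k => ln (INR k)) 1 n.
Proof.
induction n as [|n IH]; [simpl; rewrite sum_n_m_1_0; apply ln_1|].
rewrite fact_simpl, mult_INR, sum_n_m_1_S, <- IH, Rplus_comm.
apply ln_mult; [apply lt_0_INR; lia | apply INR_fact_lt_0].
Qed.

Lemma euler_log_sum_eq x n : 0 < x < 1 ->
  euler_log_sum x n = 2 * sum_n_m (fun k => ln (INR k)) 1 n
    - sum_n_m (fun k => ln (INR k + x)) 1 n - sum_n_m (fun k => ln (INR k - x)) 1 n.
Proof.
intros Hx. unfold euler_log_sum. induction n as [|n IH].
- rewrite !sum_n_m_1_0. ring.
- rewrite !sum_n_m_1_S, IH, neg_ln_one_minus_sq; [ring|].
  rewrite S_INR. generalize (pos_INR n). lra.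
Qed.

Lemma A_eq n x : 0 < x < 1 ->
  A n x = lnGamma (1 + x) + lnGamma (1 - x) + euler_log_sum x n - x ^ 2 * harmonic2 n.
Proof.
intros Hx. unfold A. fold (harmonic2 n).
rewrite ln_mult by (try apply INR_fact_lt_0; lra).
rewrite ln_fact, ln_abs_Gamma_neg_sub, ln_abs_Gamma_neg_add, euler_log_sum_eq by lra.
replace (1 + x) with (x + 1) by ring. rewrite lnGamma_succ by lra. ring.
Qed.

(** * Asymptotics of A_n *)

Lemma A_bounds n x : 0 < x <= 1 / 2 ->
  zeta2 * x ^ 2 <= A n x <= zeta2 * x ^ 2 + 2 * (zeta2 + harmonic2 n) * x ^ 4.
Proof.
intros Hx. rewrite A_eq by lra.
assert (HF := lnGamma_sym_bounds x Hx).
assert (HT := euler_log_sum_bounds x n Hx).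
assert (HH := harmonic2_nonneg n).
assert (0 <= x ^ 4 * harmonic2 n) by (apply Rmult_le_pos; [nra | lra]).
nra.
Qed.

Lemma A_div_sq_lim n : filterlim (fun x => A n x / x ^ 2) (at_right 0) (locally zeta2).
Proof.
apply (filterlim_at_right_0_quadratic _ _ (2 * (zeta2 + harmonic2 n)) (1 / 2)); [lra|].
intros x Hx. assert (HA := A_bounds n x ltac:(lra)).
assert (Hx2 : 0 < x ^ 2) by nra.
replace (A n x / x ^ 2 - zeta2) with ((A n x - zeta2 * x ^ 2) / x ^ 2) by (field; lra).
rewrite Rabs_pos_eq by (apply Rdiv_le_0_compat; lra).
apply Rmult_le_reg_r with (x ^ 2); [exact Hx2|].
unfold Rdiv. rewrite Rmult_assoc, Rinv_l by lra. lra.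
Qed.

Lemma A_succ_sub n x : 0 < x < 1 ->
  A (S n) x - A n x = - ln (1 - x ^ 2 / (INR n + 1) ^ 2) - x ^ 2 / (INR n + 1) ^ 2.
Proof.
intros Hx. rewrite !A_eq by lra. unfold euler_log_sum.
rewrite sum_n_m_1_S, harmonic2_succ, S_INR. field.
generalize (pos_INR n). lra.
Qed.

Lemma neg_ln_one_minus_sq_quartic_lim k : 1 <= k ->
  filterlim (fun x => (- ln (1 - x ^ 2 / k ^ 2) - x ^ 2 / k ^ 2) / x ^ 4) (at_right 0)
    (locally (/ (2 * k ^ 4))).
Proof.
intros Hk. apply (filterlim_at_right_0_quadratic _ _ 2 (1 / 2)); [lra|].
intros x Hx. set (y := x ^ 2 / k ^ 2).
assert (Hx4 : 0 < x ^ 4) by (apply pow_lt; lra).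
assert (Hk2 : 1 <= k ^ 2) by nra.
assert (Hy : 0 < y <= 1 / 4).
{ unfold y. split; [apply Rdiv_lt_0_compat; nra|].
  apply Rmult_le_reg_r with (k ^ 2); [lra|]. unfold Rdiv. rewrite Rmult_assoc, Rinv_l; nra. }
destruct (neg_ln_one_minus_taylor y ltac:(lra)) as [Hlo Hhi].
assert (Hy3 : y ^ 3 / (1 - y) <= 2 * x ^ 2 * x ^ 4).
{ apply Rmult_le_reg_r with (1 - y); [lra|].
  unfold Rdiv. rewrite Rmult_assoc, Rinv_l, Rmult_1_r by lra.
  assert (y <= x ^ 2) by (unfold y; apply Rmult_le_reg_r with (k ^ 2); [lra|];
    unfold Rdiv; rewrite Rmult_assoc, Rinv_l; nra).
  assert (0 <= y ^ 2 <= x ^ 4) by (split; nra).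
  assert (y ^ 3 <= x ^ 2 * x ^ 4)
    by (replace (y ^ 3) with (y * y ^ 2) by ring; apply Rmult_le_compat; lra).
  assert (0 <= x ^ 2 * x ^ 4) by (apply Rmult_le_pos; nra). nra. }
replace ((- ln (1 - y) - y) / x ^ 4 - / (2 * k ^ 4))
  with ((- ln (1 - y) - y - y ^ 2 / 2) / x ^ 4) by (unfold y; field; nra).
rewrite Rabs_pos_eq by (apply Rdiv_le_0_compat; lra).
apply Rmult_le_reg_r with (x ^ 4); [exact Hx4|].
unfold Rdiv at 1. rewrite Rmult_assoc, Rinv_l by lra. nra.
Qed.

Lemma ln_one_minus_lim (u : R -> R) l :
  filterlim (fun x => u x / x ^ 2) (at_right 0) (locally l) ->
  filterlim (fun x => / x ^ 2 * ln (1 - u x)) (at_right 0) (locally (- l)).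
Proof.
intros Hw. set (w := fun x => u x / x ^ 2) in Hw.
assert (Hsq : filterlim (fun x => x ^ 2) (at_right 0) (locally 0)).
{ apply (filterlim_at_right_0_quadratic _ _ 1 1); [lra|].
  intros x Hx. rewrite Rminus_0_r, Rabs_pos_eq by nra. lra. }
assert (Hu : filterlim u (at_right 0) (locally 0)).
{ apply (filterlim_ext_loc (fun x => x ^ 2 * w x)).
  - eapply filter_imp; [| exact (at_right_0_between 1 Rlt_0_1)].
    intros x Hx. unfold w. field. cbv beta in Hx. nra.
  - assert (H := filterlim_Rmult_fun _ _ _ _ Hsq Hw). now rewrite Rmult_0_l in H. }
assert (Hu1 : at_right 0 (fun x => 0 < x /\ u x < 1)).
{ apply filter_and; [exists (mkposreal 1 Rlt_0_1); now intros y _ Hy|].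
  eapply filter_imp; [| exact (proj1 (filterlim_locally u 0) Hu (mkposreal 1 Rlt_0_1))].
  intros x Hx. change (Rabs (u x - 0) < 1) in Hx. apply Rabs_lt_between' in Hx. lra. }
apply (filterlim_le_le (F := at_right 0) (fun x => - w x * / (1 - u x)) _ (fun x => - w x)
  (Finite (- l))).
- eapply filter_imp; [| exact Hu1]. intros x [Hx Hux].
  destruct (ln_one_minus_bounds (u x) Hux) as [Hlo Hhi].
  assert (Hi : 0 < / x ^ 2) by (apply Rinv_0_lt_compat, pow_lt; lra).
  unfold w. split.
  + replace (- (u x / x ^ 2) * / (1 - u x)) with (/ x ^ 2 * (- u x / (1 - u x)))
      by (field; split; lra).
    apply Rmult_le_compat_l; lra.
  + replace (- (u x / x ^ 2)) with (/ x ^ 2 * - u x) by (field; lra).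
    apply Rmult_le_compat_l; lra.
- replace (Finite (- l)) with (Finite (- l * / (1 - 0))) by (f_equal; field).
  apply filterlim_Rmult_fun; [now apply filterlim_Ropp_fun|].
  apply filterlim_Rinv_fun; [lra|].
  apply filterlim_Rminus_fun; [apply filterlim_const | exact Hu].
- now apply filterlim_Ropp_fun.
Qed.

Theorem mainTheorem6 : forall n : nat,
  filterlim (fun x => / x ^ 2 * ln (A n x / A (S n) x)) (at_right 0)
    (locally (- / (2 * (INR n + 1) ^ 4 * zeta2))).
Proof.
intros n. assert (Hn := pos_INR n). assert (Hz := zeta2_ge_1).
set (D := fun x => - ln (1 - x ^ 2 / (INR n + 1) ^ 2) - x ^ 2 / (INR n + 1) ^ 2).
assert (HA : at_right 0 (fun x => 0 < x < 1 /\ 0 < A (S n) x)).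
{ eapply filter_imp; [| exact (at_right_0_between (1 / 2) ltac:(lra))].
  intros x Hx. cbv beta in Hx. split; [lra|].
  assert (H := A_bounds (S n) x ltac:(lra)). nra. }
assert (Hratio : filterlim (fun x => D x / A (S n) x / x ^ 2) (at_right 0)
  (locally (/ (2 * (INR n + 1) ^ 4) * / zeta2))).
{ apply (filterlim_ext_loc (fun x => D x / x ^ 4 * / (A (S n) x / x ^ 2))).
  - eapply filter_imp; [| exact HA]. intros x [Hx HAx]. field. split; lra.
  - apply filterlim_Rmult_fun; [apply neg_ln_one_minus_sq_quartic_lim; lra|].
    apply filterlim_Rinv_fun; [lra | apply A_div_sq_lim]. }
replace (- / (2 * (INR n + 1) ^ 4 * zeta2)) with (- (/ (2 * (INR n + 1) ^ 4) * / zeta2))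
  by (field; split; nra).
apply (filterlim_ext_loc (fun x => / x ^ 2 * ln (1 - D x / A (S n) x))).
- eapply filter_imp; [| exact HA]. intros x [Hx HAx]. do 2 f_equal.
  replace (A n x) with (A (S n) x - D x) by (unfold D; rewrite <- A_succ_sub by lra; ring).
  field. lra.
- now apply ln_one_minus_lim.
Qed.
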